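(* Let $\upsilon\in(0,1]$, $P_b>0$, $h>0$, $T_c>0$, $\sigma^2>0$, $B>0$, $R\ge 0$ and $\ell>0$. Define $E_{\mathrm{MPT}}(t)=\upsilon P_bh(T_c-t)$ and $E_{\mathrm{off}}(t)=(2^{\frac{\ell}{Bt}}-1)\frac{\sigma^2}{h}t$, and consider Problem P8: maximize $E_{\mathrm{MPT}}(t)-E_{\mathrm{off}}(t)$ over $t$ subject to $0<t\le T_c$ and $R+E_{\mathrm{MPT}}(t)-E_{\mathrm{off}}(t)\ge 0$. Let $t^*$ be the optimal $t$ and $G_{\mathrm{off}}(\ell,R,h)=E_{\mathrm{MPT}}(t^* )-E_{\mathrm{off}}(t^* )$. With $W$ the principal branch of the Lambert function ($W(x)e^{W(x)}=x$) and $w=W\!\left(\frac{\upsilon P_bh^2}{\sigma^2e}-\frac1e\right)$, define $$\rho(h)=\frac{\ln 2}{B(1+w)},\quad y(h)=\frac{\sigma^2\ln 2}{Bh}e^{w+1},\quad c=\frac{T_cB(1+w)}{\ln 2},\quad c'=BT_c\log_2\!\left(1+\frac{Rh}{\sigma^2T_c}\right).$$ Then: (1) if either (a) $R\le\frac{BT_cy(h)}{\ln2}-\frac{\sigma^2}{h}T_c$ and $\ell\le\frac{\upsilon P_bhT_c+R}{y(h)}$, or (b) $R>\frac{BT_cy(h)}{\ln2}-\frac{\sigma^2}{h}T_c$ and $\ell<c$, then $t^*=\rho(h)\ell$ and $G_{\mathrm{off}}(\ell,R,h)=\upsilon P_bhT_c-y(h)\ell$; (2) if $R>\frac{BT_cy(h)}{\ln2}-\frac{\sigma^2}{h}T_c$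 and $c\le\ell\le c'$, then $t^*=T_c$ and $G_{\mathrm{off}}(\ell,R,h)=-(2^{\frac{\ell}{BT_c}}-1)\frac{\sigma^2}{h}T_c$; (3) for all other combinations of $R$ and $\ell$, Problem P8 is infeasible.
   Context: This concerns offloading in a single fading block of duration $T_c$ with channel power gain $h$: $\ell$ bits are to be offloaded, $R$ is residual energy carried over from previous blocks, the block is split into power transfer of length $T_c-t$ and transmission of length $t$ at fixed rate over bandwidth $B$ with noise variance $\sigma^2$, $\upsilon$ is the energy conversion efficiency and $P_b$ the base-station transmit power. *)

From Stdlib Require Import Reals Lra ClassicalEpsilon.
Open Scope R_scope.

(* Principal branch of the Lambert W function: for x >= -1/e, W0 x is the
   unique w >= -1 with w * e^w = x.  (Outside that domain the value is
   unspecified; it is only used here at arguments > -1/e.) *)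
Definition LambertW0 (x : R) : R :=
  epsilon (inhabits 0%R) (fun w => -1 <= w /\ w * exp w = x).

Definition log2 (x : R) : R := ln x / ln 2.

Definition E_MPT (ups Pb h Tc t : R) : R := ups * Pb * h * (Tc - t).

Definition E_off (s2 h B l t : R) : R :=
  (Rpower 2 (l / (B * t)) - 1) * (s2 / h) * t.

Definition P8_obj (ups Pb h Tc s2 B l t : R) : R :=
  E_MPT ups Pb h Tc t - E_off s2 h B l t.

Definition P8_feasible (ups Pb h Tc s2 B R0 l t : R) : Prop :=
  0 < t <= Tc /\ R0 + E_MPT ups Pb h Tc t - E_off s2 h B l t >= 0.

Definition P8_optimal (ups Pb h Tc s2 B R0 l t : R) : Prop :=
  P8_feasible ups Pb h Tc s2 B R0 l t /\
  forall s, P8_feasible ups Pb h Tc s2 B R0 l s ->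
    P8_obj ups Pb h Tc s2 B l s <= P8_obj ups Pb h Tc s2 B l t.

From Stdlib Require Import Reals Lra Psatz ClassicalEpsilon.
Open Scope R_scope.

(* With a = υ P_b h, k = σ²/h and m = ℓ ln 2 / B the objective of P8 is
   a (T_c - t) - k t (e^(m/t) - 1), and t ↦ t e^(m/t) is convex.  Its tangent
   lines give t e^(m/t) ≥ e^u (m - (u - 1) t) for every u, with equality iff
   m/t = u.  For u = w + 1 the Lambert equation says exactly a - k = k w e^(w+1),
   which makes the resulting upper bound of the objective constant in t: the
   unconstrained maximizer is t = m/(1+w) = ρℓ.  When ρℓ ≥ T_c, the choice
   u = m/T_c shows instead that the objective increases on (0, T_c].  The cases
   of the corollary restate these two situations, together with the energy
   budget at ρℓ or at T_c, as conditions on ℓ and R, using ℓ ≤ c ⟺ ρℓ ≤ T_c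
   and the identity υP_bhT_c + K = y c. *)

Lemma exp_le_exp_iff x y : exp x <= exp y <-> x <= y.
Proof.
  split; intros H.
  - destruct (Rle_or_lt x y) as [|Hlt]; [assumption|].
    apply exp_increasing in Hlt; lra.
  - destruct H as [Hlt | ->]; [left; apply exp_increasing|]; lra.
Qed.

Lemma xexp_le_compat x y : -1 <= x -> x <= y -> x * exp x <= y * exp y.
Proof.
  intros Hx Hxy.
  destruct (Rle_or_lt x 0) as [Hx0|Hx0].
  - (* x e^(x-y) ≤ x (1 + x - y) since x ≤ 0, and y - x (1 + x - y) = (y - x)(1 + x) ≥ 0 *)
    assert (Hsplit : exp x = exp y * exp (x - y)) by (rewrite <- exp_plus; f_equal; ring).
    assert (Hlin : x * exp (x - y) <= y).
    { assert (x * exp (x - y) <= x * (1 + (x - y)))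
        by (apply Rmult_le_compat_neg_l; [lra | apply exp_ineq1_le]).
      nra. }
    pose proof (exp_pos y).
    rewrite Hsplit. nra.
  - assert (exp x <= exp y) by (apply exp_le_exp_iff; lra).
    pose proof (exp_pos x). nra.
Qed.

Lemma lambert_exists x : - / exp 1 < x -> exists w, -1 <= w /\ w * exp w = x.
Proof.
  intros Hx.
  set (b := 1 + Rabs x).
  destruct (IVT (fun v => v * exp v - x) (-1) b) as [w [Hw Hroot]].
  - intros v; reg.
  - pose proof (Rabs_pos x); unfold b; lra.
  - simpl. replace (-1) with (- (1)) by ring. rewrite exp_Ropp. lra.
  - pose proof (exp_ineq1_le b). pose proof (Rle_abs x). pose proof (Rabs_pos x).
    assert (b * (1 + b) <= b * exp b) by (apply Rmult_le_compat_l; unfold b in *; lra).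
    simpl. unfold b in *. nra.
  - exists w; split; lra.
Qed.

Lemma LambertW0_spec x :
  - / exp 1 < x -> -1 < LambertW0 x /\ LambertW0 x * exp (LambertW0 x) = x.
Proof.
  intros Hx.
  assert (Hspec : -1 <= LambertW0 x /\ LambertW0 x * exp (LambertW0 x) = x).
  { unfold LambertW0. apply epsilon_spec. now apply lambert_exists. }
  destruct Hspec as [[Hlt|Heq] Hroot]; [split; assumption|].
  rewrite <- Heq in Hroot. replace (-1) with (- (1)) in Hroot by ring.
  rewrite exp_Ropp in Hroot. lra.
Qed.

Lemma LambertW0_stationary a k x :
  0 < a -> 0 < k -> x = (a / k - 1) / exp 1 ->
  -1 < LambertW0 x /\ a - k = k * LambertW0 x * exp (LambertW0 x + 1).
Proof.
  intros Ha Hk Hx. pose proof (exp_pos 1).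
  destruct (LambertW0_spec x) as [Hw Hroot].
  { assert (0 < a / k / exp 1) by (repeat apply Rdiv_lt_0_compat; lra).
    rewrite Hx. replace ((a / k - 1) / exp 1) with (a / k / exp 1 - / exp 1) by (field; lra).
    lra. }
  split; [assumption|].
  rewrite exp_plus, <- Rmult_assoc, (Rmult_assoc k), Hroot, Hx. field. lra.
Qed.

Lemma perspective_exp_tangent_lt m u t :
  0 < t -> m / t <> u -> exp u * (m - (u - 1) * t) < t * exp (m / t).
Proof.
  intros Ht Hne.
  assert (Hsplit : exp (m / t) = exp u * exp (m / t - u))
    by (rewrite <- exp_plus; f_equal; ring).
  assert (Hline : exp u * (m - (u - 1) * t) = t * exp u * (1 + (m / t - u)))
    by (field; lra).
  assert (Hpos : 0 < t * exp u) by (pose proof (exp_pos u); nra).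
  rewrite Hsplit, Hline, <- Rmult_assoc.
  apply Rmult_lt_compat_l; [lra | apply exp_ineq1; lra].
Qed.

Definition net_energy (a k m Tc t : R) : R :=
  a * (Tc - t) - k * t * (exp (m / t) - 1).

(* net_energy with t e^(m/t) replaced by its tangent line at t = m/u. *)
Definition net_energy_tangent (a k m Tc u t : R) : R :=
  a * Tc - k * m * exp u + t * (k * (u - 1) * exp u - (a - k)).

Lemma net_energy_lt_tangent a k m Tc u t :
  0 < k -> 0 < t -> m / t <> u ->
  net_energy a k m Tc t < net_energy_tangent a k m Tc u t.
Proof.
  intros Hk Ht Hne. unfold net_energy, net_energy_tangent.
  pose proof (perspective_exp_tangent_lt m u t Ht Hne).
  assert (k * (exp u * (m - (u - 1) * t)) < k * (t * exp (m / t)))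
    by (apply Rmult_lt_compat_l; lra).
  lra.
Qed.

Lemma net_energy_eq_tangent a k m Tc u t :
  0 < t -> m / t = u -> net_energy a k m Tc t = net_energy_tangent a k m Tc u t.
Proof.
  intros Ht Hu. unfold net_energy, net_energy_tangent.
  rewrite <- Hu. field. lra.
Qed.

Definition net_feasible (a k m Tc R0 t : R) : Prop :=
  0 < t <= Tc /\ R0 + net_energy a k m Tc t >= 0.

Definition strict_maximizer (F : R -> Prop) (f : R -> R) (x : R) : Prop :=
  F x /\ forall s, F s -> s <> x -> f s < f x.

Section StationaryPoint.

Variables a k m Tc R0 w : R.
Hypotheses (Hk : 0 < k) (Hm : 0 < m) (Hw : -1 < w)
  (Hstat : a - k = k * w * exp (w + 1)).

Let stationary_point_pos : 0 < m / (1 + w).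
Proof. apply Rdiv_lt_0_compat; lra. Qed.

Lemma net_energy_stationary_value :
  net_energy a k m Tc (m / (1 + w)) = a * Tc - k * m * exp (w + 1).
Proof.
  rewrite (net_energy_eq_tangent a k m Tc (w + 1)) by (auto; field; lra).
  unfold net_energy_tangent. rewrite Hstat. ring.
Qed.

Lemma net_energy_lt_stationary t :
  0 < t -> t <> m / (1 + w) ->
  net_energy a k m Tc t < net_energy a k m Tc (m / (1 + w)).
Proof.
  intros Ht Hne.
  rewrite net_energy_stationary_value.
  replace (a * Tc - k * m * exp (w + 1))
    with (net_energy_tangent a k m Tc (w + 1) t)
    by (unfold net_energy_tangent; rewrite Hstat; ring).
  apply net_energy_lt_tangent; auto.
  intros Hu. apply Hne. replace (1 + w) with (m / t) by lra. field. lra.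
Qed.

Lemma net_energy_lt_at_Tc t :
  Tc <= m / (1 + w) -> 0 < t < Tc -> net_energy a k m Tc t < net_energy a k m Tc Tc.
Proof.
  intros HTc Ht.
  set (u := m / Tc).
  assert (Hu : w + 1 <= u).
  { unfold u. apply Rmult_le_reg_r with Tc; [lra|].
    apply Rmult_le_compat_r with (r := 1 + w) in HTc; [|lra].
    replace (m / (1 + w) * (1 + w)) with m in HTc by (field; lra).
    replace (m / Tc * Tc) with m by (field; lra). nra. }
  assert (Hslope : 0 <= k * (u - 1) * exp u - (a - k)).
  { rewrite Hstat.
    assert (w * exp w <= (u - 1) * exp (u - 1)) by (apply xexp_le_compat; lra).
    replace (exp u) with (exp (u - 1) * exp 1) by (rewrite <- exp_plus; f_equal; ring).
    rewrite exp_plus. pose proof (exp_pos 1).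
    assert (0 <= k * exp 1 * ((u - 1) * exp (u - 1) - w * exp w))
      by (apply Rmult_le_pos; [nra | lra]).
    lra. }
  assert (Hut : m / t <> u).
  { assert (m / Tc < m / t)
      by (apply Rmult_lt_compat_l; [lra | apply Rinv_lt_contravar; nra]).
    unfold u; lra. }
  apply Rlt_le_trans with (net_energy_tangent a k m Tc u t);
    [apply net_energy_lt_tangent; auto; lra|].
  rewrite (net_energy_eq_tangent a k m Tc u Tc) by (auto; lra).
  unfold net_energy_tangent. nra.
Qed.

Lemma strict_maximizer_stationary :
  m / (1 + w) <= Tc -> R0 + net_energy a k m Tc (m / (1 + w)) >= 0 ->
  strict_maximizer (net_feasible a k m Tc R0) (net_energy a k m Tc) (m / (1 + w)).
Proof.
  intros HTc Hbudget. split; [split; [lra | assumption]|].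
  intros s [Hs _] Hne. apply net_energy_lt_stationary; [lra | assumption].
Qed.

Lemma strict_maximizer_Tc :
  0 < Tc -> Tc <= m / (1 + w) -> R0 + net_energy a k m Tc Tc >= 0 ->
  strict_maximizer (net_feasible a k m Tc R0) (net_energy a k m Tc) Tc.
Proof.
  intros HTc Ht0 Hbudget. split; [split; [lra | assumption]|].
  intros s [Hs _] Hne. apply net_energy_lt_at_Tc; [assumption | lra].
Qed.

Lemma net_feasible_cases t :
  net_feasible a k m Tc R0 t ->
  (m / (1 + w) <= Tc /\ R0 + net_energy a k m Tc (m / (1 + w)) >= 0) \/
  (Tc < m / (1 + w) /\ R0 + net_energy a k m Tc Tc >= 0).
Proof.
  intros [Ht Hbudget].
  destruct (Rle_or_lt (m / (1 + w)) Tc) as [HTc|HTc]; [left | right];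
    split; try assumption.
  - destruct (Req_dec t (m / (1 + w))) as [<- | Hne]; [assumption|].
    pose proof (net_energy_lt_stationary t ltac:(lra) Hne). lra.
  - destruct (Req_dec t Tc) as [<- | Hne]; [assumption|].
    pose proof (net_energy_lt_at_Tc t ltac:(lra) ltac:(lra)). lra.
Qed.

End StationaryPoint.

Section ThresholdConditions.

(* In the corollary a = υ P_b h, k = σ²/h and q = ln 2 / B. *)
Variables a k q Tc R0 l w y c c' K : R.
Hypotheses (Hk : 0 < k) (Hq : 0 < q) (HTc : 0 < Tc) (HR : 0 <= R0) (Hl : 0 < l)
  (Hw : -1 < w) (Hstat : a - k = k * w * exp (w + 1))
  (Hy : y = k * q * exp (w + 1)) (Hc : c = Tc * (1 + w) / q)
  (Hc' : c' = Tc * ln (1 + R0 / (k * Tc)) / q) (HK : K = k * Tc * (exp (w + 1) - 1)).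

Let Hm : 0 < q * l.
Proof. nra. Qed.

Let Hy_pos : 0 < y.
Proof. rewrite Hy. apply Rmult_lt_0_compat; [nra | apply exp_pos]. Qed.

Let stationary_minus_Tc : q * l / (1 + w) - Tc = (l - c) * (q / (1 + w)).
Proof. rewrite Hc. field. lra. Qed.

Let rate_pos : 0 < q / (1 + w).
Proof. apply Rdiv_lt_0_compat; lra. Qed.

Lemma stationary_le_Tc_iff : q * l / (1 + w) <= Tc <-> l <= c.
Proof. pose proof stationary_minus_Tc. split; intros; nra. Qed.

Lemma stationary_lt_Tc_iff : q * l / (1 + w) < Tc <-> l < c.
Proof. pose proof stationary_minus_Tc. split; intros; nra. Qed.

Lemma net_energy_stationary_eq :
  net_energy a k (q * l) Tc (q * l / (1 + w)) = a * Tc - y * l.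
Proof.
  rewrite net_energy_stationary_value by assumption. rewrite Hy. ring.
Qed.

Lemma stationary_budget_iff :
  R0 + net_energy a k (q * l) Tc (q * l / (1 + w)) >= 0 <-> l <= (a * Tc + R0) / y.
Proof.
  rewrite net_energy_stationary_eq.
  assert (Hdiv : (a * Tc + R0) / y * y = a * Tc + R0) by (field; lra).
  split; intros H.
  - apply Rmult_le_reg_r with y; [assumption|]. lra.
  - apply Rmult_le_compat_r with (r := y) in H; lra.
Qed.

Lemma Tc_budget_iff : R0 + net_energy a k (q * l) Tc Tc >= 0 <-> l <= c'.
Proof.
  set (z := 1 + R0 / (k * Tc)).
  assert (Hz : 0 < z).
  { assert (0 <= R0 / (k * Tc))
      by (unfold Rdiv; apply Rmult_le_pos; [lra | left; apply Rinv_0_lt_compat; nra]).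
    unfold z; lra. }
  assert (HR0 : R0 = k * Tc * (z - 1)) by (unfold z; field; lra).
  assert (Hlog : l <= c' <-> q * l / Tc <= ln z).
  { assert (Hdiff : c' - l = (ln z - q * l / Tc) * (Tc / q))
      by (rewrite Hc'; unfold z; field; lra).
    assert (0 < Tc / q) by (apply Rdiv_lt_0_compat; lra).
    split; intros; nra. }
  rewrite Hlog, <- exp_le_exp_iff, exp_ln by assumption.
  unfold net_energy. rewrite HR0.
  assert (HkTc : 0 < k * Tc) by nra.
  replace (k * Tc * (z - 1) + (a * (Tc - Tc) - k * Tc * (exp (q * l / Tc) - 1)))
    with (k * Tc * (z - exp (q * l / Tc))) by ring.
  split; intros H.
  - apply Rmult_le_reg_l with (k * Tc); [assumption | lra].
  - apply Rle_ge, Rmult_le_pos; lra.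
Qed.

Lemma threshold_identity : a * Tc + K = y * c.
Proof.
  replace a with (k + k * w * exp (w + 1)) by lra.
  rewrite HK, Hy, Hc. field. lra.
Qed.

Lemma threshold_lt_of_Tc_budget :
  Tc < q * l / (1 + w) -> R0 + net_energy a k (q * l) Tc Tc >= 0 -> K < R0.
Proof.
  intros Ht0 Hbudget.
  assert (Hu : w + 1 < q * l / Tc).
  { apply Rmult_lt_reg_r with Tc; [assumption|].
    apply Rmult_lt_compat_r with (r := 1 + w) in Ht0; [|lra].
    replace (q * l / (1 + w) * (1 + w)) with (q * l) in Ht0 by (field; lra).
    replace (q * l / Tc * Tc) with (q * l) by (field; lra). nra. }
  apply exp_increasing in Hu.
  unfold net_energy in Hbudget. replace (Tc - Tc) with 0 in Hbudget by ring.
  assert (k * Tc * exp (w + 1) < k * Tc * exp (q * l / Tc))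
    by (apply Rmult_lt_compat_l; [nra | assumption]).
  rewrite HK. lra.
Qed.

Theorem net_energy_problem_solution :
  ((R0 <= K /\ l <= (a * Tc + R0) / y) \/ (R0 > K /\ l < c) ->
     strict_maximizer (net_feasible a k (q * l) Tc R0) (net_energy a k (q * l) Tc)
       (q * l / (1 + w)) /\
     net_energy a k (q * l) Tc (q * l / (1 + w)) = a * Tc - y * l) /\
  (R0 > K /\ c <= l <= c' ->
     strict_maximizer (net_feasible a k (q * l) Tc R0) (net_energy a k (q * l) Tc) Tc) /\
  (forall t, net_feasible a k (q * l) Tc R0 t ->
     ((R0 <= K /\ l <= (a * Tc + R0) / y) \/ (R0 > K /\ l < c)) \/
     (R0 > K /\ c <= l <= c')).
Proof.
  pose proof threshold_identity as Hthr.
  pose proof stationary_le_Tc_iff as Hle. pose proof stationary_lt_Tc_iff as Hlt.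
  pose proof stationary_budget_iff as Hbud. pose proof net_energy_stationary_eq as Hval.
  split; [|split].
  - intros Hcase. split; [|exact Hval].
    assert (Hopt : q * l / (1 + w) <= Tc /\
                   R0 + net_energy a k (q * l) Tc (q * l / (1 + w)) >= 0).
    { rewrite Hval. destruct Hcase as [[HRK Hl0] | [HRK Hlc]].
      - apply Hbud in Hl0. rewrite Hval in Hl0.
        split; [|assumption]. apply Hle, Rmult_le_reg_l with y; [assumption | lra].
      - split; [left; now apply Hlt|].
        apply Rmult_lt_compat_l with (r := y) in Hlc; [lra | assumption]. }
    destruct Hopt. apply strict_maximizer_stationary; assumption.
  - intros [HRK [Hcl Hlc']].
    assert (Ht0 : Tc <= q * l / (1 + w)).
    { destruct (Rle_or_lt Tc (q * l / (1 + w))) as [|Hgt]; [assumption|].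
      apply Hlt in Hgt. lra. }
    apply Tc_budget_iff in Hlc'.
    apply strict_maximizer_Tc with w; assumption.
  - intros t Ht.
    destruct (net_feasible_cases a k (q * l) Tc R0 w Hk Hm Hw Hstat t Ht)
      as [[Ht0 Hb0] | [Ht0 HbT]].
    + apply Hle in Ht0.
      destruct (Rle_or_lt R0 K) as [HRK|HRK]; [left; left; split; [|apply Hbud]; assumption|].
      destruct Ht0 as [Hlc | Hlc]; [left; right; split; assumption|].
      right. split; [assumption | split; [lra|]].
      assert (Heq : q * l / (1 + w) = Tc) by (rewrite Hlc, Hc; field; lra).
      rewrite Heq in Hb0. now apply Tc_budget_iff.
    + right. split; [now apply threshold_lt_of_Tc_budget|].
      split; [|now apply Tc_budget_iff].
      destruct (Rle_or_lt c l) as [|Hlc]; [assumption|]. apply Hlt in Hlc. lra.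
Qed.

End ThresholdConditions.

Lemma P8_obj_eq_net_energy ups Pb h Tc s2 B l t :
  P8_obj ups Pb h Tc s2 B l t = net_energy (ups * Pb * h) (s2 / h) (ln 2 / B * l) Tc t.
Proof.
  unfold P8_obj, E_MPT, E_off, net_energy, Rpower.
  replace (l / (B * t) * ln 2) with (ln 2 / B * l / t)
    by (unfold Rdiv; rewrite Rinv_mult; ring).
  ring.
Qed.

Lemma P8_feasible_iff ups Pb h Tc s2 B R0 l t :
  P8_feasible ups Pb h Tc s2 B R0 l t <->
  net_feasible (ups * Pb * h) (s2 / h) (ln 2 / B * l) Tc R0 t.
Proof.
  unfold P8_feasible, net_feasible. rewrite <- P8_obj_eq_net_energy.
  unfold P8_obj. split; intros [Ht Hb]; split; lra.
Qed.

Lemma P8_unique_optimal ups Pb h Tc s2 B R0 l x :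
  strict_maximizer (net_feasible (ups * Pb * h) (s2 / h) (ln 2 / B * l) Tc R0)
    (net_energy (ups * Pb * h) (s2 / h) (ln 2 / B * l) Tc) x ->
  P8_optimal ups Pb h Tc s2 B R0 l x /\
  forall t, P8_optimal ups Pb h Tc s2 B R0 l t -> t = x.
Proof.
  intros [Hx Hstrict]. unfold P8_optimal.
  setoid_rewrite P8_feasible_iff. setoid_rewrite P8_obj_eq_net_energy.
  split; [split; [assumption|]|].
  - intros s Hs. destruct (Req_dec s x) as [-> | Hne]; [lra|].
    left. now apply Hstrict.
  - intros t [Ht Hmax]. destruct (Req_dec t x) as [|Hne]; [assumption|].
    specialize (Hstrict t Ht Hne). specialize (Hmax x Hx). lra.
Qed.

Theorem corollary3 (ups Pb h Tc s2 B R0 l : R)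
  (Hups : 0 < ups <= 1) (HPb : 0 < Pb) (Hh : 0 < h) (HTc : 0 < Tc)
  (Hs2 : 0 < s2) (HB : 0 < B) (HR : 0 <= R0) (Hl : 0 < l) :
  let w := LambertW0 (ups * Pb * h ^ 2 / (s2 * exp 1) - / exp 1) in
  let rho := ln 2 / (B * (1 + w)) in
  let y := s2 * ln 2 / (B * h) * exp (w + 1) in
  let c := Tc * B * (1 + w) / ln 2 in
  let c' := B * Tc * log2 (1 + R0 * h / (s2 * Tc)) in
  let K := B * Tc * y / ln 2 - s2 / h * Tc in
  let case1 := (R0 <= K /\ l <= (ups * Pb * h * Tc + R0) / y) \/ (R0 > K /\ l < c) in
  let case2 := R0 > K /\ c <= l <= c' in
  (* (1) *)
  (case1 ->
     P8_optimal ups Pb h Tc s2 B R0 l (rho * l) /\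
     (forall t, P8_optimal ups Pb h Tc s2 B R0 l t -> t = rho * l) /\
     P8_obj ups Pb h Tc s2 B l (rho * l) = ups * Pb * h * Tc - y * l) /\
  (* (2) *)
  (case2 ->
     P8_optimal ups Pb h Tc s2 B R0 l Tc /\
     (forall t, P8_optimal ups Pb h Tc s2 B R0 l t -> t = Tc) /\
     P8_obj ups Pb h Tc s2 B l Tc = - (Rpower 2 (l / (B * Tc)) - 1) * (s2 / h) * Tc) /\
  (* (3) *)
  (~ case1 -> ~ case2 -> forall t, ~ P8_feasible ups Pb h Tc s2 B R0 l t).
Proof.
  intros w rho y c c' K case1 case2.
  assert (Hln2 : 0 < ln 2) by (rewrite <- ln_1; apply ln_increasing; lra).
  assert (Hk : 0 < s2 / h) by (apply Rdiv_lt_0_compat; lra).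
  assert (Hq : 0 < ln 2 / B) by (apply Rdiv_lt_0_compat; lra).
  destruct (LambertW0_stationary (ups * Pb * h) (s2 / h)
              (ups * Pb * h ^ 2 / (s2 * exp 1) - / exp 1)) as [Hw Hstat];
    [repeat apply Rmult_lt_0_compat; lra | assumption | pose proof (exp_pos 1); field; lra |].
  fold w in Hw, Hstat.
  assert (Hy : y = s2 / h * (ln 2 / B) * exp (w + 1)) by (unfold y; field; lra).
  assert (Hc : c = Tc * (1 + w) / (ln 2 / B)) by (unfold c; field; lra).
  assert (Hc' : c' = Tc * ln (1 + R0 / (s2 / h * Tc)) / (ln 2 / B)).
  { unfold c', log2. replace (R0 * h / (s2 * Tc)) with (R0 / (s2 / h * Tc)) by (field; lra).
    field. lra. }
  assert (HK : K = s2 / h * Tc * (exp (w + 1) - 1)) by (unfold K; rewrite Hy; field; lra).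
  destruct (net_energy_problem_solution (ups * Pb * h) (s2 / h) (ln 2 / B) Tc R0 l w y c c' K
              Hk Hq HTc HR Hl Hw Hstat Hy Hc Hc' HK) as [Case1 [Case2 Cases]].
  split; [|split].
  - intros H1. destruct (Case1 H1) as [Hmax Hval].
    replace (rho * l) with (ln 2 / B * l / (1 + w)) by (unfold rho; field; lra).
    destruct (P8_unique_optimal _ _ _ _ _ _ _ _ _ Hmax) as [Hopt Huniq].
    refine (conj Hopt (conj Huniq _)). now rewrite P8_obj_eq_net_energy.
  - intros H2. destruct (P8_unique_optimal _ _ _ _ _ _ _ _ _ (Case2 H2)) as [Hopt Huniq].
    refine (conj Hopt (conj Huniq _)). unfold P8_obj, E_MPT, E_off. ring.
  - intros N1 N2 t Ht. apply P8_feasible_iff in Ht.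
    destruct (Cases t Ht) as [H | H]; [apply N1 | apply N2]; exact H.
Qed.
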